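(* Let $\varphi:G\to T$ be an unramified hyperelliptic morphism. Then its dilation subgraph $C_\varphi\subseteq T$ is a cycle. Conversely, given a tree $T$ and a cycle $C\subseteq T$, there exists a unique unramified hyperelliptic morphism $\varphi:G\to T$ with dilation subgraph $C$.
   Context: Graphs: finite set $X$ with idempotent root map $r$ and involution $\iota$ fixing $r(X)$ pointwise; vertices, half-edges, edges (size-2 $\iota$-orbits), legs ($\iota$-fixed half-edges); $\mathrm{val}(v)$ = number of half-edges rooted at $v$; weights $g(v)\ge0$, $\chi(v)=2-2g(v)-\mathrm{val}(v)$. A harmonic morphism $\varphi:G\to T$ is a map $X(G)\to X(T)$ commuting with $r,\iota$, edges to edges or vertices, with $d_\varphi\ge0$ equal on halves of an edge, zero exactly on half-edges mapped to vertices, and $d_\varphi(v)=\sum_{h'\mapsto h,\,r(h')=v}d_\varphi(h')$ for every $h$ rooted at $\varphi(v)$; finite if $d_\varphi>0$ on half-edges; unramified if finite and $d_\varphi(v)\chi(\varphi(v))-\chi(v)=0$ for all $v$. A tree is a connected weighted graph of genus $0$. A hyperelliptic morphism is a finite harmonic morphism $\varphi:G\to T$ of degree $2$ onto a tree $T$ with $d_\varphi(v)=2$ whenever $g(v)>0$. Its dilation subgraph $C_\varphi$ is the set of $x\in X(T)$ with exactly one preimage. A subgraph is a subset of $X(T)$ preserved by $r$ and $\iota$; a cycle is a subgraph $C$ such that every vertex $v$ of $C$ has $2-2g(v)-\mathrm{val}_C(v)\le 0$ and $\mathrm{val}_C(v)$ even, where $\mathrm{val}_C(v)$ counts half-edges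 of $C$ rooted at $v$. Uniqueness is up to isomorphism over $T$. *)

From HB Require Import structures.
From mathcomp Require Import all_boot all_order all_algebra.
Set Implicit Arguments. Unset Strict Implicit. Unset Printing Implicit Defensive.
Import Order.TTheory GRing.Theory Num.Theory.

(* A (weighted) graph: a finite set X with an idempotent root map r and an
   involution iota fixing r(X) pointwise; weights are a function on X, only
   their values on vertices are ever used. *)
Record graph := Graph {
  gX : finType;
  groot : gX -> gX;
  giota : gX -> gX;
  gwt : gX -> nat;
  groot_idem : forall x, groot (groot x) = groot x;
  giota_inv : forall x, giota (giota x) = x;
  giota_root : forall x, giota (groot x) = groot x }.

Section GraphDefs.
Variable G : graph.
Implicit Types (x v h : gX G).

Definition vertex x : bool := groot x == x.
Definition half_edge x : bool := ~~ vertex x.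
Definition edge_half h : bool := half_edge h && (giota h != h).
Definition leg h : bool := half_edge h && (giota h == h).

Definition val v : nat := #|[set h | half_edge h & groot h == v]|.
Definition chi v : int := 2%:Z - 2%:Z * (gwt v)%:Z - (val v)%:Z.

Definition adj : rel (gX G) :=
  fun x y => (groot x == y) || (groot y == x) || (giota x == y).
Definition connected_graph : Prop :=
  (0 < #|[set v | vertex v]|)%N /\ forall x y, connect adj x y.

(* genus = first Betti number + sum of vertex weights *)
Definition genus : int :=
  (#|[set h | edge_half h]| %/ 2)%:Z - (#|[set v | vertex v]|)%:Z + 1
  + (\sum_(v | vertex v) gwt v)%:Z.

Definition is_tree : Prop := connected_graph /\ genus = 0.

Definition subgraph (C : {set gX G}) : Prop :=
  forall x, x \in C -> groot x \in C /\ giota x \in C.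
Definition valC (C : {set gX G}) v : nat :=
  #|[set h in C | half_edge h & groot h == v]|.
Definition is_cycle (C : {set gX G}) : Prop :=
  subgraph C /\
  forall v, v \in C -> vertex v ->
    (2%:Z - 2%:Z * (gwt v)%:Z - (valC C v)%:Z <= 0)%R /\ ~~ odd (valC C v).
End GraphDefs.

Section Morphisms.
Variables G T : graph.
Variable phi : gX G -> gX T.
Variable d : gX G -> nat.

Definition harmonic : Prop :=
  [/\ (forall x, phi (groot x) = groot (phi x)) /\
        (forall x, phi (giota x) = giota (phi x)),
      forall h, edge_half h -> vertex (phi h) || edge_half (phi h),
      forall h, half_edge h -> d (giota h) = d h,
      forall h, half_edge h -> (d h = 0%N <-> vertex (phi h)) &
      forall v, vertex v -> forall h, half_edge h -> groot h = phi v ->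
        d v = (\sum_(h' | [&& half_edge h', groot h' == v & phi h' == h]) d h')%N].

Definition finite_morphism : Prop :=
  harmonic /\ forall h, half_edge h -> (0 < d h)%N.

Definition unramified : Prop :=
  finite_morphism /\
  forall v, vertex v -> ((d v)%:Z * chi (phi v) - chi v = 0)%R.

Definition has_degree (n : nat) : Prop :=
  forall w, vertex w -> (\sum_(v | vertex v && (phi v == w)) d v)%N = n.

Definition hyperelliptic : Prop :=
  [/\ finite_morphism, has_degree 2, is_tree T &
      forall v, vertex v -> (0 < gwt v)%N -> d v = 2%N].

Definition unramified_hyperelliptic : Prop := hyperelliptic /\ unramified.

Definition dilation : {set gX T} := [set x | #|[set y | phi y == x]| == 1%N].
End Morphisms.

Definition iso_over (G1 G2 T : graph) (phi1 : gX G1 -> gX T) (d1 : gX G1 -> nat)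
  (phi2 : gX G2 -> gX T) (d2 : gX G2 -> nat) : Prop :=
  exists psi : gX G1 -> gX G2,
    [/\ bijective psi /\
        (forall x, psi (groot x) = groot (psi x)),
        forall x, psi (giota x) = giota (psi x),
        forall v, vertex v -> gwt (psi v) = gwt v,
        forall x, phi2 (psi x) = phi1 x &
        forall x, d2 (psi x) = d1 x].

From Pilot Require Import Defs.
From mathcomp Require Import all_boot all_order all_algebra.
From mathcomp Require Import zify.
Set Implicit Arguments. Unset Strict Implicit. Unset Printing Implicit Defensive.
Import Order.TTheory GRing.Theory Num.Theory.

(* Over each point x of T the fibre of an unramified hyperelliptic morphism
   has total local degree 2, so it is a single point of degree 2 (x in the
   dilation subgraph C) or two points of degree 1.  At a vertex v over w in C,
   counting half-edges gives val v = 2 val w - val_C w, and the Riemann-Hurwitz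
   condition chi v = 2 chi w then yields val_C w = 2 + 2 g(v), because the
   vertices of a tree have weight 0; so C is a cycle.
   Conversely, two copies of T glued along C, with weight val_C / 2 - 1 at the
   glued vertices, form an unramified hyperelliptic double cover with dilation
   subgraph C.  For uniqueness, label the two points over each x outside C by
   sheets arbitrarily; where the labelling jumps across a root or an edge
   defines a 1-cochain on T with values in F_2.  As T has genus 0, its
   F_2-coboundary map is onto, so the jumps are a coboundary, and correcting
   the labelling by it gives an isomorphism onto the glued double cover. *)

Lemma F2_cases (u : 'F_2) : u = 0%R \/ u = 1%R.
Proof. case: u => [[|[|]]] //= ?; [left | right]; exact: val_inj. Qed.

Lemma F2_addr_eq0 (u v : 'F_2) : (u + v = 0)%R -> u = v.
Proof. by case: (F2_cases u) => ->; case: (F2_cases v) => ->. Qed.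

Lemma F2_addr_neq0 (u v : 'F_2) : (u + v != 0)%R = (u != 0%R) (+) (v != 0%R).
Proof. by case: (F2_cases u) => ->; case: (F2_cases v) => ->. Qed.

Section GraphFacts.
Variable G : graph.
Implicit Types x h v : gX G.

Lemma vertex_root x : vertex (groot x).
Proof. by rewrite /vertex groot_idem. Qed.

Lemma giota_vertex v : vertex v -> giota v = v.
Proof. by move/eqP=> <-; rewrite giota_root. Qed.

Lemma giota_inj : injective (@giota G).
Proof. exact: can_inj (@giota_inv G). Qed.

Lemma half_edge_iota h : half_edge (giota h) = half_edge h.
Proof.
rewrite /half_edge /vertex; congr negb; apply/eqP/eqP => E.
  by rewrite -[h]giota_inv -E giota_root E.
by rewrite -E giota_root E.
Qed.

Definition oriented h := edge_half h && (enum_rank h < enum_rank (giota h))%N.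

Lemma oriented_iota h : edge_half h -> ~~ oriented h -> oriented (giota h).
Proof.
rewrite /oriented /edge_half half_edge_iota giota_inv => /andP[-> ne] /=.
rewrite ne eq_sym ne /= -leqNgt leq_eqVlt => /orP[/eqP/val_inj/enum_rank_inj E|//].
by rewrite E eqxx in ne.
Qed.

Lemma card_vertex_half_edge :
  (#|[set v : gX G | vertex v]| + #|[set h : gX G | half_edge h]|)%N = #|gX G|.
Proof.
rewrite -(cardsC [set v : gX G | vertex v]); congr (_ + _)%N.
by apply: eq_card => x; rewrite !inE.
Qed.

Lemma card_edge_half :
  (2 * #|[set h : gX G | oriented h]|)%N = #|[set h : gX G | edge_half h]|.
Proof.
set O := [set h : gX G | oriented h]; set E := [set h : gX G | edge_half h].
rewrite -(cardsID O E).
have -> : E :&: O = O.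
  by apply/setP=> x; rewrite !inE /oriented; case: (edge_half x).
have -> : E :\: O = (@giota G) @: O.
  apply/setP=> x; rewrite !inE; apply/andP/imsetP => [[nO eh]|[y]].
    by exists (giota x); rewrite ?giota_inv // inE oriented_iota.
  rewrite inE /oriented /edge_half => /andP[/andP[hy ne] lt] ->.
  by rewrite half_edge_iota hy giota_inv eq_sym ne /= -leqNgt ltnW.
by rewrite card_imset ?mul2n ?addnn //; exact: giota_inj.
Qed.

Lemma valC_sum (C : {set gX G}) v :
  valC C v = (\sum_(h | half_edge h && (groot h == v)) (h \in C : nat))%N.
Proof.
rewrite /valC -sum1_card.
rewrite (eq_bigl (fun h => (half_edge h && (groot h == v)) && (h \in C))).
  by rewrite big_mkcondr; apply: eq_bigr => h _; case: (h \in C).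
by move=> h; rewrite !inE andbC.
Qed.

Lemma val_valC_sum (C : {set gX G}) v :
  (\sum_(h | half_edge h && (groot h == v)) (if h \in C then 1 else 2)
   + valC C v = 2 * Defs.val v)%N.
Proof.
rewrite valC_sum -big_split /= /Defs.val -sum1_card big_distrr /=.
by apply: eq_big => [h|h _]; rewrite ?inE // muln1; case: (h \in C).
Qed.

End GraphFacts.

Lemma val_by_fibres (G T : graph) (f : gX G -> gX T) (v : gX G) :
  (forall y, f (groot y) = groot (f y)) ->
  (forall y, half_edge (f y) = half_edge y) ->
  Defs.val v = (\sum_(h | half_edge h && (groot h == f v))
                  #|[set y | groot y == v & f y == h]|)%N.
Proof.
move=> f_root f_half.
rewrite /Defs.val -sum1_card (partition_big f (fun h => half_edge h && (groot h == f v))).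
  apply: eq_bigr => h /andP[hh _]; rewrite -sum1_card; apply: eq_bigl => y.
  rewrite !inE; case: (eqVneq (f y) h) => [fy|]; rewrite ?andbF ?andbT //.
  by rewrite -f_half fy hh.
by move=> y; rewrite inE => /andP[hy /eqP ry]; rewrite f_half hy -f_root ry eqxx.
Qed.

(** * Trees have trivial F_2-cohomology *)

Lemma sum_mul_delta2 (I : finType) (R : pzSemiRingType) (F : I -> R) (a b : I) :
  (\sum_i F i * ((i == a)%:R + (i == b)%:R) = F a + F b)%R.
Proof.
have delta c : (\sum_i F i * (i == c)%:R = F c)%R.
  by rewrite (bigD1 c) //= eqxx mulr1 big1 ?addr0 // => i /negbTE ->; rewrite mulr0.
by under eq_bigr do rewrite mulrDr; rewrite big_split /= !delta.
Qed.

Section TreeCoboundary.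
Variable T : graph.
Implicit Types x y h v : gX T.
Local Open Scope ring_scope.

Definition link := ({h : gX T | half_edge h} + {h : gX T | oriented h})%type.

Definition link_ends (j : link) : gX T * gX T :=
  match j with
  | inl h => (val h, groot (val h))
  | inr h => (val h, giota (val h))
  end.

Definition coboundary_mx : 'M['F_2]_(#|gX T|, #|{: link}|) :=
  \matrix_(i, j) ((enum_val i == (link_ends (enum_val j)).1)%:R +
                  (enum_val i == (link_ends (enum_val j)).2)%:R).

Lemma coboundary_mxE (u : 'rV['F_2]_#|gX T|) j :
  (u *m coboundary_mx) 0 j = u 0 (enum_rank (link_ends (enum_val j)).1) +
                             u 0 (enum_rank (link_ends (enum_val j)).2).
Proof.
rewrite mxE (reindex (@enum_rank _)) /=; last exact: onW_bij (@enum_rank_bij _).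
by under eq_bigr do rewrite mxE enum_rankK; rewrite sum_mul_delta2.
Qed.

Lemma link_of_adj x y : adj x y ->
  x = y \/ exists j, link_ends j = (x, y) \/ link_ends j = (y, x).
Proof.
case/orP=> [/orP[]|] /eqP <-.
- case hx: (half_edge x); last by left; move/negbFE: hx => /eqP.
  by right; exists (inl (exist _ x hx)); left.
- case hy: (half_edge y); last by left; move/negbFE: hy => /eqP.
  by right; exists (inl (exist _ y hy)); right.
- case ex: (edge_half x); last first.
    left; move: ex; rewrite /edge_half; case: (boolP (half_edge x)) => /= [_|].
      by move/negbFE/eqP.
    by move/negbNE/giota_vertex.
  right; case: (boolP (oriented x)) => [ox|/(oriented_iota ex) oix].
    by exists (inr (exist _ x ox)); left.
  by exists (inr (exist _ (giota x) oix)); right; rewrite /= giota_inv.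
Qed.

Lemma coboundary_ker_const (u : 'rV['F_2]_#|gX T|) : connected_graph T ->
  u *m coboundary_mx = 0 -> forall x y, u 0 (enum_rank x) = u 0 (enum_rank y).
Proof.
move=> [_ conn] uM.
have adj_eq x y : adj x y -> u 0 (enum_rank x) = u 0 (enum_rank y).
  case/link_of_adj=> [-> //|[j Ej]].
  have : (u *m coboundary_mx) 0 (enum_rank j) = 0 by rewrite uM mxE.
  by rewrite coboundary_mxE enum_rankK; case: Ej => -> /F2_addr_eq0.
move=> x y; have /connectP[p pth ->] := conn x y.
elim: p x pth => //= z p IH x /andP[xz pz].
by rewrite -IH //; exact: adj_eq.
Qed.

Lemma coboundary_rank_ge : connected_graph T ->
  (#|gX T| <= (\rank coboundary_mx).+1)%N.
Proof.
move=> conn; have [x0 _] := card_gt0P conn.1.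
suff : (\rank (kermx coboundary_mx) <= 1)%N by rewrite mxrank_ker; lia.
have sub : (kermx coboundary_mx <= (const_mx 1 : 'rV['F_2]_#|gX T|))%MS.
  apply/row_subP => i; set r := row i (kermx coboundary_mx).
  have rM : r *m coboundary_mx = 0 by apply/sub_kermxP; exact: row_sub.
  have -> : r = r 0 (enum_rank x0) *: (const_mx 1 : 'rV['F_2]_#|gX T|).
    apply/rowP=> k; rewrite [RHS]mxE [X in _ * X]mxE mulr1 -[k]enum_valK.
    exact: coboundary_ker_const.
  exact: scalemx_sub.
exact: leq_trans (mxrankS sub) (rank_leq_row _).
Qed.

(* The kernel has dimension at most 1, so by rank-nullity the corank of the
   coboundary map plus the total weight is at most the genus. *)
Lemma tree_weight0_row_full : is_tree T ->
  (\sum_(v : gX T | vertex v) gwt v = 0)%N /\ row_full coboundary_mx.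
Proof.
move=> [conn g0].
have rk_ge := coboundary_rank_ge conn.
have rk_le := rank_leq_col coboundary_mx.
have cX := card_vertex_half_edge T.
have cE := card_edge_half T.
have cL : #|{: link}| =
    (#|[set h : gX T | half_edge h]| + #|[set h : gX T | oriented h]|)%N.
  by rewrite card_sum !card_sig; congr addn; apply: eq_card => x; rewrite !inE.
rewrite /row_full; move: (\rank _) rk_ge rk_le => r rk_ge rk_le.
move: g0; rewrite /genus -cE mulKn // cL in rk_le *.
move: (\sum_(v | _) _)%N => w g0.
by split; [|apply/eqP]; lia.
Qed.

Lemma tree_gwt0 v : is_tree T -> vertex v -> gwt v = 0%N.
Proof.
move=> /tree_weight0_row_full[/eqP w0 _] vv.
by move: w0; rewrite (bigD1 v) //=; lia.
Qed.

Lemma tree_coboundary_onto : is_tree T -> forall a b : gX T -> bool,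
  exists f : gX T -> bool,
    (forall h, half_edge h -> f h (+) f (groot h) = a h) /\
    (forall h, oriented h -> f h (+) f (giota h) = b h).
Proof.
move=> /tree_weight0_row_full[_ full] a b.
pose c : 'rV['F_2]_#|{: link}| := \row_j
  (match enum_val j with inl h => a (val h) | inr h => b (val h) end)%:R.
have /submxP[D /matrixP cD] : (c <= coboundary_mx)%MS by exact: submx_full.
exists (fun x => D 0 (enum_rank x) != 0); split => [h hh | h oh].
  have := cD 0 (enum_rank (inl (exist _ h hh) : link)).
  rewrite coboundary_mxE mxE enum_rankK /= => E.
  by rewrite -F2_addr_neq0 -E; case: (a h).
have := cD 0 (enum_rank (inr (exist _ h oh) : link)).
rewrite coboundary_mxE mxE enum_rankK /= => E.
by rewrite -F2_addr_neq0 -E; case: (b h).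
Qed.

End TreeCoboundary.

(** * Fibres of an unramified hyperelliptic morphism *)

Lemma sum_gt0_eq2 (I : finType) (A : {set I}) (F : I -> nat) :
  (forall i, 0 < F i)%N -> (\sum_(i in A) F i = 2)%N ->
  (#|A| = 1 /\ forall i, i \in A -> F i = 2)%N \/
  (#|A| = 2 /\ forall i, i \in A -> F i = 1)%N.
Proof.
move=> F_gt0 sumF.
have [i0 i0A] : exists i0, i0 \in A.
  by apply/set0Pn; apply: contra_eqN sumF => /eqP ->; rewrite big_set0.
have at_i i : i \in A -> [/\ F i + \sum_(j in A :\ i) F j = 2,
    #|A :\ i| <= \sum_(j in A :\ i) F j & #|A| = #|A :\ i|.+1]%N.
  move=> iA; split; first by rewrite -(big_setD1 i iA).
    by rewrite -sum1_card; apply: leq_sum => j _; exact: F_gt0.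
  by rewrite (cardsD1 i A) iA.
have [sum0 le0 cA] := at_i i0 i0A; have F0 := F_gt0 i0.
have [cA1|cA2] : (#|A| = 1 \/ #|A| = 2)%N by lia.
- left; split=> // i iA; have [sumi _ cAi] := at_i i iA.
  have : #|A :\ i| == 0%N by rewrite -eqSS -cAi cA1.
  by rewrite cards_eq0 => /eqP Ai0; rewrite Ai0 big_set0 in sumi; lia.
- right; split=> // i iA; have [sumi lei cAi] := at_i i iA.
  by have := F_gt0 i; lia.
Qed.

Section UnramifiedHyperelliptic.
Variables (G T : graph) (phi : gX G -> gX T) (d : gX G -> nat).
Hypothesis H : unramified_hyperelliptic phi d.
Implicit Types y v h : gX G.
Local Notation C := (dilation phi).

Lemma morph_root y : phi (groot y) = groot (phi y).
Proof. case: H => -[[[[E _] _ _ _ _] _] _ _ _] _; exact: E. Qed.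
Lemma morph_iota y : phi (giota y) = giota (phi y).
Proof. case: H => -[[[[_ E] _ _ _ _] _] _ _ _] _; exact: E. Qed.
Lemma morph_edge_half h : edge_half h -> vertex (phi h) || edge_half (phi h).
Proof. case: H => -[[[_ E _ _ _] _] _ _ _] _; exact: E. Qed.
Lemma morph_deg0 h : half_edge h -> (d h = 0%N <-> vertex (phi h)).
Proof. case: H => -[[[_ _ _ E _] _] _ _ _] _; exact: E. Qed.
Lemma morph_harmonic v (h : gX T) : vertex v -> half_edge h -> groot h = phi v ->
  d v = (\sum_(h' | [&& half_edge h', groot h' == v & phi h' == h]) d h')%N.
Proof. by case: H => -[[[_ _ _ _ E] _] _ _ _] _ /E; apply. Qed.
Lemma morph_deg_half_gt0 h : half_edge h -> (0 < d h)%N.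
Proof. case: H => -[[_ E] _ _ _] _; exact: E. Qed.
Lemma morph_degree2 : has_degree phi d 2.
Proof. case: H => -[_ E _ _] _; exact: E. Qed.
Lemma morph_tree : is_tree T.
Proof. case: H => -[_ _ E _] _; exact: E. Qed.
Lemma morph_deg_gwt v : vertex v -> (0 < gwt v)%N -> d v = 2%N.
Proof. case: H => -[_ _ _ E] _; exact: E. Qed.
Lemma morph_unramified v : vertex v -> ((d v)%:Z * chi (phi v) - chi v = 0)%R.
Proof. case: H => _ [_ E]; exact: E. Qed.

Lemma vertex_morph y : vertex (phi y) = vertex y.
Proof.
apply/idP/idP => [|/eqP vy]; last by rewrite /vertex -morph_root vy.
apply: contraLR => hy; apply/negP => /(morph_deg0 hy) d0.
by have := morph_deg_half_gt0 hy; rewrite d0.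
Qed.

Lemma half_edge_morph y : half_edge (phi y) = half_edge y.
Proof. by rewrite /half_edge vertex_morph. Qed.

Lemma morph_harmonic_sum v (h : gX T) : vertex v -> half_edge h -> groot h = phi v ->
  d v = (\sum_(h' | (groot h' == v) && (phi h' == h)) d h')%N.
Proof.
move=> vv hh rh; rewrite (morph_harmonic vv hh rh); apply: eq_bigl => y.
case: (eqVneq (phi y) h) => [E|]; rewrite ?andbF ?andbT //.
by rewrite -half_edge_morph E hh.
Qed.

(* A vertex of degree 0 would carry no half-edges, so the Riemann-Hurwitz
   condition would give it genus 1, while positive genus forces degree 2. *)
Lemma morph_deg_gt0 y : (0 < d y)%N.
Proof.
case hy: (half_edge y); first exact: morph_deg_half_gt0.
move/negbFE: hy => vy; rewrite lt0n; apply/negP => /eqP d0.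
have val0 : Defs.val y = 0%N.
  apply/eqP; rewrite cards_eq0; apply/eqP/setP => z; rewrite !inE.
  apply/negP => /andP[hz /eqP rz].
  have := morph_harmonic_sum vy (h := phi z); rewrite half_edge_morph hz.
  rewrite -morph_root rz => /(_ isT erefl).
  rewrite (bigD1 z) /=; last by rewrite rz !eqxx.
  by rewrite d0; have := morph_deg_half_gt0 hz; lia.
have := morph_unramified vy; rewrite d0 /chi val0 => g1.
by have := morph_deg_gwt vy; rewrite d0; lia.
Qed.

Definition fibre (x : gX T) := [set y | phi y == x].

Lemma mem_dilation x : (x \in C) = (#|fibre x| == 1%N).
Proof. by rewrite inE. Qed.

Lemma fibre_deg_sum x : (\sum_(y in fibre x) d y = 2)%N.
Proof.
under eq_bigl do rewrite inE.
case vx: (vertex x).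
  rewrite -(morph_degree2 vx); apply: eq_bigl => y.
  by case: (eqVneq (phi y) x) => [E|]; rewrite ?andbF // -vertex_morph E vx.
have hx : half_edge x by rewrite /half_edge vx.
rewrite (partition_big (@groot G) (fun v => vertex v && (phi v == groot x))); last first.
  by move=> y /eqP E; rewrite vertex_root morph_root E eqxx.
rewrite -(morph_degree2 (vertex_root x)); apply: eq_bigr => v /andP[vv /eqP pv].
by rewrite (morph_harmonic_sum vv hx) ?pv //; apply: eq_bigl => y; rewrite andbC.
Qed.

Lemma fibre_deg x :
  (#|fibre x| = 1 /\ forall y, phi y = x -> d y = 2)%N \/
  (#|fibre x| = 2 /\ forall y, phi y = x -> d y = 1)%N.
Proof.
by case: (sum_gt0_eq2 morph_deg_gt0 (fibre_deg_sum x)) => [[c F]|[c F]];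
  [left | right]; split => // y E; apply: F; rewrite inE E.
Qed.

Lemma card_fibre x : #|fibre x| = if x \in C then 1%N else 2%N.
Proof. by rewrite mem_dilation; case: (fibre_deg x) => -[->]. Qed.

Lemma morph_deg y : d y = if phi y \in C then 2%N else 1%N.
Proof. by rewrite mem_dilation; case: (fibre_deg (phi y)) => -[-> F]; exact: F. Qed.

Lemma fibre_nonempty x : exists y, phi y = x.
Proof.
have : (0 < #|fibre x|)%N by rewrite card_fibre; case: (x \in C).
by case/card_gt0P => y; rewrite inE => /eqP; exists y.
Qed.

Lemma fibre_iota x : fibre (giota x) = (@giota G) @: fibre x.
Proof.
apply/setP=> y; rewrite inE; apply/eqP/imsetP => [E|[z]].
  by exists (giota y); rewrite ?giota_inv // inE morph_iota E giota_inv.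
by rewrite inE => /eqP <- ->; rewrite morph_iota.
Qed.

Lemma dilation_iota x : (giota x \in C) = (x \in C).
Proof. by rewrite !mem_dilation fibre_iota card_imset //; exact: giota_inj. Qed.

(* Harmonicity at [groot y] for [y] over [x]: [d y = 2] forces
   [d (groot y) = 2]. *)
Lemma dilation_root x : x \in C -> groot x \in C.
Proof.
move=> xC; case vx: (vertex x); first by rewrite (eqP vx).
have hx : half_edge x by rewrite /half_edge vx.
have [y px] := fibre_nonempty x.
have := morph_harmonic_sum (vertex_root y) hx; rewrite morph_root px => /(_ erefl).
rewrite (bigD1 y) /=; last by rewrite px !eqxx.
rewrite (morph_deg y) (morph_deg (groot y)) morph_root px xC.
by case: (groot x \in C); lia.
Qed.

Lemma groot_inj_fibre x y1 y2 : groot x \notin C -> phi y1 = x -> phi y2 = x ->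
  groot y1 = groot y2 -> y1 = y2.
Proof.
move=> rxC p1 p2 r12; case vx: (vertex x).
  have /eqP <- : vertex y1 by rewrite -vertex_morph p1.
  have /eqP <- : vertex y2 by rewrite -vertex_morph p2.
  by rewrite r12.
have hx : half_edge x by rewrite /half_edge vx.
case: (eqVneq y1 y2) => // ne.
have := morph_harmonic_sum (vertex_root y1) hx; rewrite morph_root p1 => /(_ erefl).
rewrite (bigD1 y1) /=; last by rewrite p1 !eqxx.
rewrite (bigD1 y2) /=; last by rewrite p2 r12 !eqxx eq_sym ne.
rewrite (morph_deg (groot y1)) morph_root p1 (negbTE rxC).
by have := morph_deg_gt0 y1; have := morph_deg_gt0 y2; lia.
Qed.

Lemma giota_fixed_lift y : giota (phi y) = phi y -> giota y = y.
Proof.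
move=> lg; case hy: (half_edge y); last by move/negbFE: hy => /giota_vertex.
apply/eqP/negPn/negP => ne.
have := morph_edge_half (introT andP (conj hy ne)).
by rewrite /edge_half lg eqxx andbF orbF vertex_morph; move/negP: hy.
Qed.

Lemma val_over_dilation v : phi v \in C ->
  (Defs.val v + valC C (phi v) = 2 * Defs.val (phi v))%N.
Proof.
move=> vC; rewrite -(val_valC_sum C); congr (_ + _)%N.
have fv : fibre (phi v) = [set v].
  move: vC; rewrite mem_dilation => /cards1P[v' E].
  have : v \in fibre (phi v) by rewrite inE.
  by rewrite E inE => /eqP ->.
rewrite (val_by_fibres v morph_root half_edge_morph); apply: eq_bigr => h /andP[_ /eqP rh].
rewrite -card_fibre; apply: eq_card => y; rewrite !inE.
case: (eqVneq (phi y) h) => [py|]; rewrite ?andbF ?andbT //.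
have : groot y \in fibre (phi v) by rewrite inE morph_root py rh.
by rewrite fv inE => /eqP ->; rewrite eqxx.
Qed.

End UnramifiedHyperelliptic.

Lemma dilation_cycle (G T : graph) (phi : gX G -> gX T) (d : gX G -> nat) :
  unramified_hyperelliptic phi d -> is_cycle (dilation phi).
Proof.
move=> H; split=> [x xC|w wC vw].
  by split; [exact: (dilation_root H) | rewrite (dilation_iota H)].
have [v pv] := fibre_nonempty H w.
have vv : vertex v by rewrite -(vertex_morph H) pv.
have := val_over_dilation H (v := v); rewrite pv => /(_ wC) vals.
have := morph_unramified H vv; rewrite (morph_deg H v) pv wC.
rewrite /chi (tree_gwt0 (morph_tree H) vw) => U.
have -> : valC (dilation phi) w = (2 * (1 + gwt v))%N by lia.
by rewrite oddM /=; split => //; lia.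
Qed.

(** * The double cover glued along a cycle *)

Section DoubleCover.
Variables (T : graph) (C : {set gX T}).
Hypothesis C_sub : subgraph C.
Implicit Types (x : gX T) (b : bool).

Lemma subgraph_iota x : (giota x \in C) = (x \in C).
Proof. by apply/idP/idP => [/C_sub[_]|/C_sub[_ //]]; rewrite giota_inv. Qed.

Lemma subgraph_root x : x \in C -> groot x \in C.
Proof. by case/C_sub. Qed.

(* The point [(x, b)] lies on sheet [b] over [x]; over [C] only sheet [false]
   is kept, so the two sheets are glued along [C]. *)
Definition dc_point (p : gX T * bool) := (p.1 \in C) ==> ~~ p.2.
Definition dcoverX := {p : gX T * bool | dc_point p}.

Lemma dc_point_mk x b : dc_point (x, (x \notin C) && b).
Proof. by rewrite /dc_point /=; case: (x \in C). Qed.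

Definition dc_mk x b : dcoverX := exist _ (x, (x \notin C) && b) (dc_point_mk x b).

Lemma dc_eta (p : dcoverX) : p = dc_mk (val p).1 (val p).2.
Proof.
apply: val_inj; case: p => [[x b]] /=; rewrite /dc_point /=.
by case: (x \in C) => //= /negbTE ->.
Qed.

Lemma dc_mk_in x b : x \in C -> dc_mk x b = dc_mk x false.
Proof. by move=> xC; apply: val_inj; rewrite /= xC. Qed.

Definition dc_root (p : dcoverX) := dc_mk (groot (val p).1) (val p).2.
Definition dc_iota (p : dcoverX) := dc_mk (giota (val p).1) (val p).2.

Lemma dc_root_idem p : dc_root (dc_root p) = dc_root p.
Proof. by apply: val_inj; rewrite /= groot_idem andbA andbb. Qed.

Lemma dc_iota_inv p : dc_iota (dc_iota p) = p.
Proof.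
rewrite [RHS]dc_eta; apply: val_inj; rewrite /= giota_inv subgraph_iota.
by case: (_ \in C); rewrite ?andbb.
Qed.

Lemma dc_iota_root p : dc_iota (dc_root p) = dc_root p.
Proof. by apply: val_inj; rewrite /= giota_root andbA andbb. Qed.

(* Over [C] the weight [valC / 2 - 1] is the one Riemann-Hurwitz demands. *)
Definition dc_wt (p : dcoverX) : nat :=
  if (val p).1 \in C then ((valC C (val p).1)./2 - 1)%N else 0%N.

Definition dcover : graph :=
  @Graph _ dc_root dc_iota dc_wt dc_root_idem dc_iota_inv dc_iota_root.

Definition dc_proj (p : gX dcover) : gX T := (val p).1.
Definition dc_deg (p : gX dcover) : nat := if dc_proj p \in C then 2 else 1.

Lemma vertex_dcover (p : gX dcover) : vertex p = vertex (dc_proj p).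
Proof.
case: p => [[x b] ok]; rewrite /vertex /dc_proj /=; apply/eqP/eqP.
  by move/(congr1 (fun q => (val q).1)).
move=> E; apply: val_inj; rewrite /= E; move: ok; rewrite /dc_point /=.
by case: (x \in C) => //= /negbTE ->.
Qed.

Lemma half_edge_dcover (p : gX dcover) : half_edge p = half_edge (dc_proj p).
Proof. by rewrite /half_edge vertex_dcover. Qed.

Lemma sum_dc_fibre x (P : pred (gX dcover)) (F : gX dcover -> nat) :
  (\sum_(p | (dc_proj p == x) && P p) F p =
   \sum_(b | dc_point (x, b) && P (dc_mk x b)) F (dc_mk x b))%N.
Proof.
rewrite (reindex_onto (dc_mk x) (fun p : gX dcover => (val p).2)); last first.
  by move=> p /andP[/eqP <- _]; rewrite /dc_proj -dc_eta.
apply: eq_bigl => b; rewrite /dc_proj eqxx /= /dc_point /=.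
by case: (x \in C); case: b => //=; rewrite ?andbT ?andbF.
Qed.

Lemma dilation_dcover : dilation dc_proj = C.
Proof.
apply/setP => x; rewrite inE -sum1_card.
rewrite (eq_bigl (fun p => (dc_proj p == x) && true)) => [|p]; last first.
  by rewrite inE andbT.
by rewrite sum_dc_fibre big_mkcond big_bool /dc_point /=; case: (x \in C).
Qed.

Lemma sum_dc_star (v : gX dcover) (h : gX T) (F : gX dcover -> nat) :
  vertex v -> groot h = dc_proj v ->
  (\sum_(p | (groot p == v) && (dc_proj p == h)) F p =
   if dc_proj v \in C then \sum_(b | dc_point (h, b)) F (dc_mk h b)
   else F (dc_mk h (val v).2))%N.
Proof.
move=> vv rh; rewrite (eq_bigl (fun p => (dc_proj p == h) && (groot p == v))).
  rewrite sum_dc_fibre; case vC: (dc_proj v \in C).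
    apply: eq_bigl => b; rewrite [v in _ == v]dc_eta.
    by rewrite -val_eqE /= rh vC /dc_proj eqxx andbT.
  have hC : h \notin C by apply: contraFN vC => /subgraph_root; rewrite rh.
  rewrite (eq_bigl (pred1 (val v).2)) ?big_pred1_eq // => b.
  rewrite /dc_point /= (negbTE hC) [v in _ == v]dc_eta -val_eqE /= rh vC hC /=.
  by rewrite xpair_eqE /dc_proj eqxx.
by move=> p; rewrite andbC.
Qed.

Lemma card_dc_star (v : gX dcover) (h : gX T) : vertex v -> groot h = dc_proj v ->
  #|[set p | groot p == v & dc_proj p == h]| =
  if dc_proj v \in C then (if h \in C then 1%N else 2%N) else 1%N.
Proof.
move=> vv rh; rewrite -sum1_card.
rewrite (eq_bigl (fun p => (groot p == v) && (dc_proj p == h))) => [|p]; last first.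
  by rewrite inE.
rewrite sum_dc_star // big_mkcond big_bool /dc_point /=.
by case: (_ \in C); case: (h \in C).
Qed.

Lemma val_dcover_by_fibres (v : gX dcover) :
  Defs.val v = (\sum_(h | half_edge h && (groot h == dc_proj v))
                  #|[set p | groot p == v & dc_proj p == h]|)%N.
Proof. by apply: val_by_fibres => // p; rewrite half_edge_dcover. Qed.

Lemma val_dcover_in (v : gX dcover) : vertex v -> dc_proj v \in C ->
  (Defs.val v + valC C (dc_proj v) = 2 * Defs.val (dc_proj v))%N.
Proof.
move=> vv vC; rewrite -(val_valC_sum C) val_dcover_by_fibres; congr addn.
by apply: eq_bigr => h /andP[_ /eqP rh]; rewrite card_dc_star // vC.
Qed.

Lemma val_dcover_out (v : gX dcover) : vertex v -> dc_proj v \notin C ->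
  Defs.val v = Defs.val (dc_proj v).
Proof.
move=> vv vC; rewrite val_dcover_by_fibres [RHS]/Defs.val -sum1_card.
apply: eq_big => [h|h /andP[_ /eqP rh]]; first by rewrite inE.
by rewrite card_dc_star // (negbTE vC).
Qed.

Lemma dcover_harmonic : harmonic dc_proj dc_deg.
Proof.
split=> // [p|h _|h|v vv h hh rh].
- rewrite /edge_half half_edge_dcover => /andP[hp ne]; apply/orP; right; rewrite hp /=.
  by apply: contra ne => /eqP E; rewrite [p in _ == p]dc_eta /= /dc_iota E.
- by rewrite /dc_deg /dc_proj /= subgraph_iota.
- rewrite half_edge_dcover /dc_deg => /negbTE hh.
  by split=> [|vh]; [case: (_ \in C) | rewrite vh in hh].
rewrite (eq_bigl (fun p => (groot p == v) && (dc_proj p == h))) => [|p].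
  rewrite sum_dc_star // /dc_deg; case vC: (dc_proj v \in C).
    by rewrite big_mkcond big_bool /dc_point /=; case: (h \in C).
  by rewrite /dc_proj /=; case hC: (h \in C) => //; move/subgraph_root: hC; rewrite rh vC.
case: (eqVneq (dc_proj p) h) => [E|]; rewrite ?andbF ?andbT //.
by rewrite half_edge_dcover E hh.
Qed.

Lemma dcover_degree2 : has_degree dc_proj dc_deg 2.
Proof.
move=> w vw; rewrite (eq_bigl (fun p => (dc_proj p == w) && true)) => [|p].
  rewrite sum_dc_fibre big_mkcond big_bool /dc_point /= /dc_deg /dc_proj /=.
  by case: (w \in C).
by rewrite vertex_dcover andbT; case: (eqVneq (dc_proj p) w) => [->|]; rewrite ?andbF ?vw.
Qed.

Lemma dcover_unramified_hyperelliptic : is_tree T -> is_cycle C ->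
  unramified_hyperelliptic dc_proj dc_deg.
Proof.
move=> tT [_ cyc].
have fin : finite_morphism dc_proj dc_deg.
  by split=> [|h _]; [exact: dcover_harmonic | rewrite /dc_deg; case: (_ \in C)].
split; first split=> // [|v _]; first exact: dcover_degree2.
  by rewrite /= /dc_wt /dc_deg /dc_proj; case: (_ \in C).
split=> // v vv.
have vw : vertex (dc_proj v) by rewrite -vertex_dcover.
rewrite /chi /= /dc_wt /dc_deg -/(dc_proj v) (tree_gwt0 tT vw).
case: (boolP (dc_proj v \in C)) => [vC|vC]; last by rewrite (val_dcover_out vv vC); lia.
have := val_dcover_in vv vC; have [] := cyc _ vC vw; rewrite (tree_gwt0 tT vw).
move: (valC C _) => k k_ge2 /negbTE k_even.
have [m km] : exists m, k = (2 * m)%N.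
  by exists k./2; rewrite -[k in LHS]odd_double_half k_even add0n -mul2n.
by rewrite km mul2n half_double -mul2n in k_ge2 *; lia.
Qed.

End DoubleCover.

Arguments dc_proj {T C} C_sub p.
Arguments dc_deg {T C} C_sub p.

(** * Uniqueness *)

Lemma addb_cross (a b c e : bool) : a (+) b = c (+) e -> c (+) b = e (+) a.
Proof. by case: a; case: b; case: c; case: e. Qed.

Section Sheets.
Variables (G T : graph) (phi : gX G -> gX T) (d : gX G -> nat).
Hypothesis H : unramified_hyperelliptic phi d.
Implicit Types (x : gX T) (y : gX G).
Local Notation C := (dilation phi).

Lemma fibre_other x y1 : x \notin C -> phi y1 = x ->
  exists2 y2, phi y2 = x & y1 != y2.
Proof.
move=> xC p1; have /cards2P[a [b [ne E]]] : #|fibre phi x| == 2%N.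
  by rewrite (card_fibre H) (negbTE xC).
have over z : z \in [set a; b] -> phi z = x by rewrite -E inE => /eqP.
have : y1 \in [set a; b] by rewrite -E inE p1.
rewrite !inE => /orP[] /eqP ->.
  by exists b; rewrite ?over // !inE eqxx orbT.
by exists a; rewrite 1?eq_sym ?over // !inE eqxx.
Qed.

Lemma fibre_pair x y1 y2 : x \notin C -> phi y1 = x -> phi y2 = x -> y1 != y2 ->
  fibre phi x = [set y1; y2].
Proof.
move=> xC p1 p2 ne; apply/eqP; rewrite eq_sym eqEcard cards2 ne.
rewrite (card_fibre H) (negbTE xC) leqnn andbT.
by apply/subsetP => z; rewrite !inE => /orP[] /eqP ->; rewrite ?p1 ?p2.
Qed.

(* The two points over [x] outside [C] are told apart by [enum_rank]; this
   labelling need not be compatible with [groot] and [giota]. *)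
Definition sheet0 y : bool :=
  [exists z, (phi z == phi y) && (enum_rank z < enum_rank y)%N].

Lemma sheet0_pair y y' : phi y \notin C -> phi y = phi y' -> y != y' ->
  sheet0 y = (enum_rank y' < enum_rank y)%N.
Proof.
move=> yC p ne; have E := fibre_pair yC erefl (esym p) ne.
apply/existsP/idP => [[z /andP[pz lt]]|lt]; last by exists y'; rewrite lt p eqxx.
have : z \in fibre phi (phi y) by rewrite inE.
by rewrite E !inE => /orP[] /eqP zE; rewrite zE ?ltnn in lt.
Qed.

Lemma sheet0_neq y y' : phi y \notin C -> phi y = phi y' -> y != y' ->
  sheet0 y' = ~~ sheet0 y.
Proof.
move=> yC p ne; rewrite (sheet0_pair yC p ne) (sheet0_pair _ (esym p)) -?p //.
  case: ltngtP => // /val_inj/enum_rank_inj E.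
  by rewrite E eqxx in ne.
by rewrite eq_sym.
Qed.

Lemma sheet0_inj y y' : phi y \notin C -> phi y = phi y' -> sheet0 y = sheet0 y' ->
  y = y'.
Proof.
move=> yC p; case: (eqVneq y y') => // ne.
by rewrite (sheet0_neq yC p ne); case: (sheet0 y).
Qed.

Lemma sheet0_jump_iota y y' : phi y \notin C -> phi y = phi y' ->
  sheet0 (giota y) (+) sheet0 y = sheet0 (giota y') (+) sheet0 y'.
Proof.
move=> yC p; case: (eqVneq y y') => [-> //|ne].
have iyC : phi (giota y) \notin C by rewrite (morph_iota H) (dilation_iota H).
have ip : phi (giota y) = phi (giota y') by rewrite !(morph_iota H) p.
have ine : giota y != giota y' by rewrite (inj_eq (@giota_inj G)).
rewrite (sheet0_neq yC p ne) (sheet0_neq iyC ip ine).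
by case: (sheet0 y); case: (sheet0 (giota y)).
Qed.

Lemma sheet0_jump_root y y' : groot (phi y) \notin C -> phi y = phi y' ->
  sheet0 (groot y) (+) sheet0 y = sheet0 (groot y') (+) sheet0 y'.
Proof.
move=> ryC p; case: (eqVneq y y') => [-> //|ne].
have yC : phi y \notin C by apply: contra ryC; exact: (dilation_root H).
have ryC' : phi (groot y) \notin C by rewrite (morph_root H).
have rp : phi (groot y) = phi (groot y') by rewrite !(morph_root H) p.
have rne : groot y != groot y'.
  by apply: contra ne => /eqP E; apply/eqP/(groot_inj_fibre H ryC erefl (esym p)).
rewrite (sheet0_neq yC p ne) (sheet0_neq ryC' rp rne).
by case: (sheet0 y); case: (sheet0 (groot y)).
Qed.

Definition jump_root x : bool :=
  [exists y, (phi y == x) && (sheet0 (groot y) (+) sheet0 y)] && (groot x \notin C).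
Definition jump_iota x : bool :=
  [exists y, (phi y == x) && (sheet0 (giota y) (+) sheet0 y)] && (x \notin C).

Lemma jump_rootE y : groot (phi y) \notin C ->
  jump_root (phi y) = sheet0 (groot y) (+) sheet0 y.
Proof.
move=> ryC; rewrite /jump_root ryC andbT.
apply/existsP/idP => [[z /andP[/eqP pz]]|]; last by exists y; rewrite eqxx.
by rewrite (sheet0_jump_root ryC (esym pz)).
Qed.

Lemma jump_iotaE y : phi y \notin C ->
  jump_iota (phi y) = sheet0 (giota y) (+) sheet0 y.
Proof.
move=> yC; rewrite /jump_iota yC andbT.
apply/existsP/idP => [[z /andP[/eqP pz]]|]; last by exists y; rewrite eqxx.
by rewrite (sheet0_jump_iota yC (esym pz)).
Qed.

Lemma dilation_fibre_inj y y' : phi y \in C -> phi y = phi y' -> y = y'.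
Proof.
rewrite mem_dilation => /cards1P[z E] p.
have : y \in fibre phi (phi y) by rewrite inE.
have : y' \in fibre phi (phi y) by rewrite inE p.
by rewrite E !inE => /eqP -> /eqP ->.
Qed.

Lemma jump_iota_giota x : jump_iota (giota x) = jump_iota x.
Proof.
case: (boolP (x \in C)) => xC.
  by rewrite /jump_iota (dilation_iota H) xC !andbF.
have [y yx] := fibre_nonempty H x; subst x.
have iyC : phi (giota y) \notin C by rewrite (morph_iota H) (dilation_iota H).
by rewrite -(morph_iota H) !jump_iotaE // giota_inv addbC.
Qed.

(* [f] makes the jumps of [sheet0] a coboundary (see [tree_coboundary_onto]). *)
Variable f : gX T -> bool.
Hypothesis f_root : forall h, half_edge h -> f h (+) f (groot h) = jump_root h.
Hypothesis f_iota : forall h, oriented h -> f h (+) f (giota h) = jump_iota h.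

Lemma f_edge_iota x : edge_half x -> f x (+) f (giota x) = jump_iota x.
Proof.
move=> ex; case: (boolP (oriented x)) => [/f_iota //|/(oriented_iota ex)/f_iota].
by rewrite giota_inv jump_iota_giota addbC.
Qed.

Definition sheet y := sheet0 y (+) f (phi y).

Lemma sheet_root y : groot (phi y) \notin C -> sheet (groot y) = sheet y.
Proof.
move=> ryC; case hy: (half_edge y); last by move/negbFE: hy => /eqP ->.
have := f_root (h := phi y); rewrite (half_edge_morph H) hy jump_rootE // => /(_ isT).
by rewrite /sheet (morph_root H); exact: addb_cross.
Qed.

Lemma sheet_iota y : phi y \notin C -> sheet (giota y) = sheet y.
Proof.
move=> yC; case: (boolP (vertex (phi y))) => [|nvy].
  by rewrite (vertex_morph H) => /giota_vertex ->.
case: (eqVneq (giota (phi y)) (phi y)) => [/(giota_fixed_lift H) -> //|ne].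
have := f_edge_iota (introT andP (conj nvy ne)); rewrite jump_iotaE //.
by rewrite /sheet (morph_iota H); exact: addb_cross.
Qed.

Variable C_sub : subgraph C.

Definition to_dcover y : gX (dcover C_sub) := dc_mk C (phi y) (sheet y).

Lemma dc_proj_to_dcover y : dc_proj C_sub (to_dcover y) = phi y.
Proof. by []. Qed.

Lemma dc_deg_to_dcover y : dc_deg C_sub (to_dcover y) = d y.
Proof. by rewrite /dc_deg dc_proj_to_dcover (morph_deg H). Qed.

Lemma to_dcover_root y : to_dcover (groot y) = groot (to_dcover y).
Proof.
apply: val_inj; rewrite /= (morph_root H); congr pair.
case: (boolP (groot (phi y) \in C)) => //= ryC.
have yC : phi y \notin C by apply: contra ryC; exact: (dilation_root H).
by rewrite yC sheet_root.
Qed.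

Lemma to_dcover_iota y : to_dcover (giota y) = giota (to_dcover y).
Proof.
apply: val_inj; rewrite /= (morph_iota H) (dilation_iota H); congr pair.
by case: (boolP (phi y \in C)) => //= yC; rewrite sheet_iota.
Qed.

Lemma to_dcover_inj : injective to_dcover.
Proof.
move=> y y' E; have p : phi y = phi y' by rewrite -!dc_proj_to_dcover E.
case: (boolP (phi y \in C)) => yC; first exact: dilation_fibre_inj.
have := congr1 (fun q => (val q).2) E; rewrite /= -p yC /= /sheet -p => s.
by apply: (sheet0_inj yC p); move: s; rewrite !(addbC _ (f _)) => /addbI.
Qed.

Lemma to_dcover_onto p : p \in codom to_dcover.
Proof.
rewrite [p]dc_eta; move: (val p).1 (val p).2 => x b.
have [y py] := fibre_nonempty H x.
case: (boolP (x \in C)) => xC.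
  by rewrite (dc_mk_in b xC) -(dc_mk_in (sheet y) xC) -py; exact: codom_f.
have [y' py' ne] := fibre_other (y1 := y) xC py.
have s' : sheet y' = ~~ sheet y.
  by rewrite /sheet (sheet0_neq _ _ ne) ?py ?py' // addNb.
case: (eqVneq (sheet y) b) => [<-|nb]; first by rewrite -py; exact: codom_f.
have -> : b = sheet y' by rewrite s'; move: nb; case: b; case: (sheet y).
by rewrite -py'; exact: codom_f.
Qed.

Lemma to_dcover_bij : bijective to_dcover.
Proof.
apply: inj_card_bij to_dcover_inj _; rewrite -(card_codom to_dcover_inj).
by apply/subset_leq_card/subsetP => p _; exact: to_dcover_onto.
Qed.

End Sheets.

Section IsoOver.
Variables (G1 G2 : graph) (f : gX G1 -> gX G2).
Hypothesis f_root : forall x, f (groot x) = groot (f x).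

Lemma vertex_inj_root : injective f -> forall x, vertex (f x) = vertex x.
Proof. by move=> f_inj x; rewrite /vertex -f_root (inj_eq f_inj). Qed.

Lemma val_bij_root : bijective f -> forall v, Defs.val (f v) = Defs.val v.
Proof.
move=> f_bij v; have f_inj := bij_inj f_bij.
rewrite /Defs.val -(card_imset _ f_inj); apply: eq_card => h.
have [g fK gK] := f_bij; rewrite -[h]gK mem_imset // !inE /half_edge.
by rewrite (vertex_inj_root f_inj) -f_root (inj_eq f_inj).
Qed.

End IsoOver.

Lemma iso_over_unramified (G1 G2 T : graph) (phi1 : gX G1 -> gX T) (d1 : gX G1 -> nat)
    (phi2 : gX G2 -> gX T) (d2 : gX G2 -> nat) (psi : gX G1 -> gX G2) :
  unramified phi1 d1 -> unramified phi2 d2 -> bijective psi ->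
  (forall x, psi (groot x) = groot (psi x)) ->
  (forall x, psi (giota x) = giota (psi x)) ->
  (forall x, phi2 (psi x) = phi1 x) -> (forall x, d2 (psi x) = d1 x) ->
  iso_over phi1 d1 phi2 d2.
Proof.
move=> [_ U1] [_ U2] psi_bij psi_root psi_iota psi_phi psi_d.
exists psi; split=> // v vv.
have vpv : vertex (psi v) by rewrite (vertex_inj_root psi_root (bij_inj psi_bij)).
have := U1 v vv; have := U2 _ vpv.
by rewrite psi_phi psi_d /chi (val_bij_root psi_root psi_bij); lia.
Qed.

Lemma iso_over_sym (G1 G2 T : graph) (phi1 : gX G1 -> gX T) (d1 : gX G1 -> nat)
    (phi2 : gX G2 -> gX T) (d2 : gX G2 -> nat) :
  iso_over phi1 d1 phi2 d2 -> iso_over phi2 d2 phi1 d1.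
Proof.
case=> psi [[[g psiK gK] psi_root] psi_iota psi_wt psi_phi psi_d].
have g_root x : g (groot x) = groot (g x).
  by apply: (can_inj psiK); rewrite psi_root !gK.
exists g; split => [||v vv|x|x].
- by split=> //; exists psi.
- by move=> x; apply: (can_inj psiK); rewrite psi_iota !gK.
- have vgv : vertex (g v) by rewrite (vertex_inj_root g_root (can_inj gK)).
  by rewrite -psi_wt ?gK.
- by rewrite -psi_phi gK.
- by rewrite -psi_d gK.
Qed.

Lemma iso_over_trans (G1 G2 G3 T : graph) (phi1 : gX G1 -> gX T) (d1 : gX G1 -> nat)
    (phi2 : gX G2 -> gX T) (d2 : gX G2 -> nat) (phi3 : gX G3 -> gX T) (d3 : gX G3 -> nat) :
  iso_over phi1 d1 phi2 d2 -> iso_over phi2 d2 phi3 d3 -> iso_over phi1 d1 phi3 d3.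
Proof.
case=> psi [[psi_bij psi_root] psi_iota psi_wt psi_phi psi_d].
case=> chi [[chi_bij chi_root] chi_iota chi_wt chi_phi chi_d].
exists (chi \o psi); split => [||v vv|x|x] /=.
- by split=> [|x]; [exact: bij_comp | rewrite psi_root chi_root].
- by move=> x; rewrite psi_iota chi_iota.
- rewrite chi_wt ?psi_wt //.
  by rewrite (vertex_inj_root psi_root (bij_inj psi_bij)).
- by rewrite chi_phi psi_phi.
- by rewrite chi_d psi_d.
Qed.

Lemma iso_over_dcover (G T : graph) (phi : gX G -> gX T) (d : gX G -> nat)
    (C : {set gX T}) (C_sub : subgraph C) :
  unramified_hyperelliptic phi d -> dilation phi = C ->
  iso_over phi d (dc_proj C_sub) (dc_deg C_sub).
Proof.
move=> H dilC; subst C.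
have [f [f_root f_iota]] :=
  tree_coboundary_onto (morph_tree H) (jump_root phi) (jump_iota phi).
have dcH := dcover_unramified_hyperelliptic C_sub (morph_tree H) (dilation_cycle H).
apply: (iso_over_unramified H.2 dcH.2 (to_dcover_bij H f C_sub)).
- exact (to_dcover_root H f_root C_sub).
- exact (to_dcover_iota H f_iota C_sub).
- by [].
- exact (dc_deg_to_dcover H f C_sub).
Qed.

Theorem proposition5p19 :
  (forall (G T : graph) (phi : gX G -> gX T) (d : gX G -> nat),
     unramified_hyperelliptic phi d -> is_cycle (dilation phi))
  /\
  (forall (T : graph) (C : {set gX T}),
     is_tree T -> is_cycle C ->
     (exists (G : graph) (phi : gX G -> gX T) (d : gX G -> nat),
        unramified_hyperelliptic phi d /\ dilation phi = C)
     /\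
     (forall (G1 G2 : graph) (phi1 : gX G1 -> gX T) (d1 : gX G1 -> nat)
             (phi2 : gX G2 -> gX T) (d2 : gX G2 -> nat),
        unramified_hyperelliptic phi1 d1 -> dilation phi1 = C ->
        unramified_hyperelliptic phi2 d2 -> dilation phi2 = C ->
        iso_over phi1 d1 phi2 d2)).
Proof.
split=> [G T phi d H|T C tT cyc]; first exact: dilation_cycle H.
have C_sub : subgraph C := cyc.1.
split=> [|G1 G2 phi1 d1 phi2 d2 H1 D1 H2 D2].
  exists (dcover C_sub), (dc_proj C_sub), (dc_deg C_sub).
  by split; [exact: dcover_unramified_hyperelliptic | exact: dilation_dcover].
apply: iso_over_trans (iso_over_dcover C_sub H1 D1) _.
exact/iso_over_sym/(iso_over_dcover C_sub H2 D2).
Qed.
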